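(* Let $q$ be a prime number, let $l\ge 2$ be an integer and let $N=q^{l}$. Then $$\mathbb{Z}\text{-}\mathcal{KS}(N)=\{\,q+d,\ q-d\;:\; d \text{ a positive integer with } d\mid (q^{l}-q)\}\setminus\{0,N\}.$$
   Context: Every nonzero rational $\alpha$ is written $\alpha=\alpha_1/\alpha_2$ with $\alpha_1\in\mathbb{Z}$, $\alpha_2$ a positive integer and $\gcd(\alpha_1,\alpha_2)=1$ (for $\alpha\in\mathbb{Z}$ this means $\alpha_2=1$). For an integer $N\ge 2$ and a nonzero rational $\alpha=\alpha_1/\alpha_2$, $N$ is called an $\alpha$-Korselt number if $N\neq\alpha$ and $\alpha_2p-\alpha_1$ divides $\alpha_2N-\alpha_1$ (in $\mathbb{Z}$) for every prime divisor $p$ of $N$. For a subset $\mathbb{A}\subseteq\mathbb{Q}$, the Korselt set $\mathbb{A}\text{-}\mathcal{KS}(N)$ is the set of all $\beta\in\mathbb{A}\setminus\{0,N\}$ such that $N$ is a $\beta$-Korselt number. *)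

From mathcomp Require Import all_boot all_order all_algebra.
Set Implicit Arguments. Unset Strict Implicit. Unset Printing Implicit Defensive.
Import Order.TTheory GRing.Theory Num.Theory.
Local Open Scope ring_scope.

(* alpha = alpha1/alpha2 in lowest terms with alpha2 > 0:
   alpha1 = numq alpha, alpha2 = denq alpha (mathcomp's rat is normalized). *)
Definition alpha_Korselt (N : nat) (alpha : rat) : Prop :=
  (N%:Q != alpha) /\
  forall p : nat, prime p -> (p %| N)%N ->
    (denq alpha * p%:Z - numq alpha %| denq alpha * N%:Z - numq alpha)%Z.

Definition ZKS (N : nat) (beta : int) : Prop :=
  beta != 0 /\ beta != N%:Z /\ alpha_Korselt N beta%:Q.

(** Every prime divisor of [q ^ l] is [q], so the Korselt condition reduces to
    the single divisibility [q - beta | q ^ l - beta], i.e. [q - beta | q ^ l - q].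
    Since [q ^ l - q > 0] for [l >= 2], this says exactly that [d := |q - beta|]
    is a positive divisor of [q ^ l - q], and [beta] is [q + d] or [q - d]. *)

From mathcomp Require Import all_boot all_order all_algebra.
From mathcomp Require Import zify.
Set Implicit Arguments.
Unset Strict Implicit.
Unset Printing Implicit Defensive.
Import Order.TTheory GRing.Theory Num.Theory.
Local Open Scope ring_scope.

Lemma alpha_Korselt_int (N : nat) (beta : int) :
  alpha_Korselt N beta%:Q <->
  N%:Z != beta /\
  forall p : nat, prime p -> (p %| N)%N -> (p%:Z - beta %| N%:Z - beta)%Z.
Proof.
rewrite /alpha_Korselt numq_int denq_int.
have -> : (N%:Q != beta%:Q) = (N%:Z != beta) by rewrite -[N%:Q]/(N%:Z)%:Q eqr_int.
by split=> -[neq_N dvdN]; split=> // p p_pr pN; move: (dvdN p p_pr pN); rewrite !mul1r.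
Qed.

Lemma dvdz_subr_shift (a b c : int) : (a - c %| b - c)%Z = (a - c %| b - a)%Z.
Proof.
have -> : b - c = (b - a) + (a - c) by rewrite addrA subrK.
by rewrite rpredDr ?dvdzz.
Qed.

Lemma prime_dvd_prime_power (p q l : nat) :
  prime p -> prime q -> (p %| q ^ l)%N -> p = q.
Proof.
by move=> p_pr q_pr; rewrite Euclid_dvdX // dvdn_prime2 // => /andP[/eqP].
Qed.

Lemma alpha_Korselt_prime_power (q l : nat) (beta : int) :
  prime q -> (0 < l)%N ->
  alpha_Korselt (q ^ l) beta%:Q <->
  (q ^ l)%N%:Z != beta /\ (q%:Z - beta %| (q ^ l - q)%N%:Z)%Z.
Proof.
move=> q_pr l_gt0; rewrite alpha_Korselt_int.
have q_dvd_ql : (q %| q ^ l)%N by rewrite Euclid_dvdX // dvdnn.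
have q_le_ql : (q <= q ^ l)%N by rewrite dvdn_leq // expn_gt0 prime_gt0.
rewrite -subzn //.
split=> -[neq_ql dvd]; split=> //.
- by rewrite -dvdz_subr_shift; apply: dvd.
- by move=> p p_pr /(prime_dvd_prime_power p_pr q_pr) ->; rewrite dvdz_subr_shift.
Qed.

Lemma exists_divisor_shift_dvdz (c beta : int) (m : nat) : (0 < m)%N ->
  (exists d : nat, (0 < d)%N /\ (d %| m)%N /\ (beta = c + d%:Z \/ beta = c - d%:Z))
  <-> (c - beta %| m%:Z)%Z.
Proof.
move=> m_gt0; rewrite dvdzE absz_nat; split.
- by move=> [d [_ [d_dvd_m [->|->]]]];
    rewrite ?opprD ?opprK addrA subrr add0r ?abszN absz_nat.
- move=> dvd_m; exists `|c - beta|%N; split; last split => //.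
  + rewrite absz_gt0 subr_eq0; apply: contraTneq dvd_m => ->.
    by rewrite subrr dvd0n -lt0n m_gt0.
  + lia.
Qed.

Theorem theorem3p2 (q l : nat) (hq : prime q) (hl : (2 <= l)%N) (beta : int) :
  ZKS (q ^ l) beta <->
  ((exists d : nat, (0 < d)%N /\ (d %| q ^ l - q)%N /\
       (beta = q%:Z + d%:Z \/ beta = q%:Z - d%:Z))
   /\ beta != 0 /\ beta != (q ^ l)%N%:Z).
Proof.
have q_lt_ql : (q ^ 1 < q ^ l)%N by rewrite ltn_exp2l // prime_gt1.
rewrite expn1 in q_lt_ql.
have l_gt0 : (0 < l)%N by apply: leq_trans hl.
rewrite /ZKS alpha_Korselt_prime_power // exists_divisor_shift_dvdz ?subn_gt0 //.
rewrite [(q ^ l)%N%:Z == _]eq_sym; tauto.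
Qed.
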